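(* Assume the constraints $\mathcal A_{\mathbf w}$ are generic. For $\theta\in L_{\mathbb R}$ outside some locus of codimension $2$ (in particular, for every $\theta$ contained in at most one hyperplane of the form $n^\perp$ with $n\in\Lambda\setminus\{0\}$), every tropical disk type in $\mathfrak T_{\mathbf w}(\theta)$ is trivalent.
   Context: $\Lambda$ finite-rank lattice with skew form $\{\cdot,\cdot\}$, $L=\Lambda^\vee$, $p^*:\Lambda\to L$, $n\mapsto\{\cdot,n\}$; $\Lambda^+$ the nonzero elements of $\sigma\cap\Lambda$ for a strictly convex rational polyhedral cone $\sigma\subset\Lambda_{\mathbb R}$. $\{e_i\}_{i\in I}$ a finite collection of vectors in $\Lambda^+$, $v_i=p^*(e_i)$. A weight vector is $\mathbf w=(\mathbf w_i)_{i\in I}$, $\mathbf w_i=(w_{i1}\le\dots\le w_{il_i})$ positive integers. Tropical disks in $L_{\mathbb R}$: $\bar\Gamma$ a finite tree without bivalent vertices; $\Gamma$ the complement in $\bar\Gamma$ of all univalent vertices but one, $V_\infty$; positive integer weights $w$ on edges; a bijection $s\mapsto E_s$ from an index set $S$ to the non-compact edges; and a proper continuous map $h:\Gamma\to L_{\mathbb R}$ embedding each edge into an affine line of rational slope, balanced ($\sum_{E\ni V}w(E)u_{(V,E)}=0$, $u_{(V,E)}$ the primitive vector from $h(V)$ into $h(E)$) at every vertex $V\ne V_\infty$; up to isomorphism. Its type is the data $(\Gamma,w,\text{marking},(V,E)\mapsto u_{(V,E)})$; a type is trivalent if all vertices other than $V_\infty$ are trivalent. Degree $\Delta_{\mathbf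 w}$: $S=\{(i,j):i\in I,1\le j\le l_i\}$ and $w(E_{ij})u_{E_{ij}}=w_{ij}v_i$. Constraints $\mathcal A_{\mathbf w}=(A_{ij})$, $A_{ij}$ a translate of $e_i^\perp$ (generic, and mutually generic); $\delta\mathcal A_{\mathbf w}$ multiplies each $A_{ij}$ by $\delta>0$; a disk matches $\delta\mathcal A_{\mathbf w}$ if $h(E_{ij})\subset\delta A_{ij}$. $\mathfrak T_{\mathbf w,\delta}(\theta)$ is the set of types of disks of degree $\Delta_{\mathbf w}$ matching $\delta\mathcal A_{\mathbf w}$ with $h(V_\infty)=\theta$, and $\mathfrak T_{\mathbf w}(\theta)$ is the set of types $\tau$ such that for every $\epsilon>0$ and all sufficiently small $\delta>0$ there is $\theta'$ in the open $\epsilon$-ball about $\theta$ with $\tau\in\mathfrak T_{\mathbf w,\delta}(\theta')$. *)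

(* Lattice Lambda = Z^r (a chosen basis), L = Lambda^dual = Z^r
   (dual basis), L_R = R^r, all as row vectors. *)
From HB Require Import structures.
From mathcomp Require Import all_boot all_order all_algebra.
From mathcomp Require Import reals.
Set Implicit Arguments. Unset Strict Implicit. Unset Printing Implicit Defensive.
Import Order.TTheory GRing.Theory Num.Theory.
Local Open Scope ring_scope.

Definition rvec (R : realType) (r : nat) (n : 'rV[int]_r) : 'rV[R]_r :=
  map_mx (fun z : int => z%:~R) n.

Definition lpair (R : realType) (r : nat) (n : 'rV[int]_r) (x : 'rV[R]_r) : R :=
  \sum_(k < r) (n 0 k)%:~R * x 0 k.

(* skew form {m,n} = m B n^T, B skew-symmetric integer matrix *)
Definition skew_form (r : nat) (B : 'M[int]_r) : Prop := B^T = - B.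

(* p^* : Lambda -> L, n |-> {. , n}; (p^* n)_k = {delta_k, n} *)
Definition pstar (r : nat) (B : 'M[int]_r) (n : 'rV[int]_r) : 'rV[int]_r :=
  n *m B^T.

Definition primitive (r : nat) (u : 'rV[int]_r) : Prop :=
  u != 0 /\ forall (d : int) (v : 'rV[int]_r), u = d *: v -> `|d| = 1.

Definition in_cone (R : realType) (r k : nat) (g : 'I_k -> 'rV[int]_r)
    (x : 'rV[R]_r) : Prop :=
  exists lam : 'I_k -> R,
    (forall j, 0 <= lam j) /\ x = \sum_(j < k) lam j *: rvec R (g j).

Definition strictly_convex_cone (R : realType) (r k : nat)
    (g : 'I_k -> 'rV[int]_r) : Prop :=
  forall x : 'rV[R]_r, in_cone g x -> in_cone g (- x) -> x = 0.

Definition in_Lambda_plus (R : realType) (r k : nat) (g : 'I_k -> 'rV[int]_r)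
    (n : 'rV[int]_r) : Prop :=
  n != 0 /\ in_cone g (rvec R n).

Definition weight_vector_ok (m : nat) (l : 'I_m -> nat)
    (w : forall i, 'I_(l i) -> nat) : Prop :=
  forall i (j j' : 'I_(l i)),
    (0 < w i j)%N /\ ((j <= j')%N -> (w i j <= w i j')%N).

Definition Sidx (m : nat) (l : 'I_m -> nat) : finType := {i : 'I_m & 'I_(l i)}.

(* Vertices of Gamma are 'I_nv,
   V_infty = vinf; compact edges are 'I_ne with endpoints esrc/etgt, weight
   ewt and u_(esrc e, e) = edir e, u_(etgt e, e) = - edir e; the non-compact
   edges are indexed directly by the marking set S: leg s is the vertex
   E_s is attached to, lwt s its weight and ldir s = u_(leg s, E_s). *)
Record disk_type (r : nat) (S : finType) := DiskType {
  nv : nat;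
  ne : nat;
  vinf : 'I_nv;
  esrc : 'I_ne -> 'I_nv;
  etgt : 'I_ne -> 'I_nv;
  ewt : 'I_ne -> nat;
  edir : 'I_ne -> 'rV[int]_r;
  leg : S -> 'I_nv;
  lwt : S -> nat;
  ldir : S -> 'rV[int]_r }.
Arguments nv {r S} d.
Arguments ne {r S} d.
Arguments vinf {r S} d.
Arguments esrc {r S} d _.
Arguments etgt {r S} d _.
Arguments ewt {r S} d _.
Arguments edir {r S} d _.
Arguments leg {r S} d _.
Arguments lwt {r S} d _.
Arguments ldir {r S} d _.

Section DiskTypes.
Variables (r : nat) (S : finType) (t : disk_type r S).

Definition valence (v : 'I_(nv t)) : nat :=
  #|[set e | esrc t e == v]| + #|[set e | etgt t e == v]|
  + #|[set s | leg t s == v]|.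

Definition adj : rel 'I_(nv t) := fun x y =>
  [exists e, ((esrc t e == x) && (etgt t e == y))
             || ((esrc t e == y) && (etgt t e == x))].

Definition is_tree : Prop :=
  (forall x y, connect adj x y) /\ (ne t).+1 = nv t.

(* combinatorial well-formedness: bar Gamma a tree without bivalent vertices,
   V_infty univalent and the only univalent vertex kept in Gamma,
   positive weights, primitive integral directions *)
Definition type_ok : Prop :=
  [/\ is_tree,
      valence (vinf t) = 1%N,
      (forall v, v != vinf t -> (3 <= valence v)%N),
      (forall e, 0 < ewt t e)%N /\ (forall s, 0 < lwt t s)%N &
      (forall e, primitive (edir t e)) /\ (forall s, primitive (ldir t s))].

Definition trivalent : Prop := forall v, v != vinf t -> valence v = 3%N.

Definition balanced_at (v : 'I_(nv t)) : Prop :=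
  \sum_(e | esrc t e == v) (edir t e *+ ewt t e)
  - \sum_(e | etgt t e == v) (edir t e *+ ewt t e)
  + \sum_(s | leg t s == v) (ldir t s *+ lwt t s) = 0.

(* h : Gamma -> L_R given by vertex positions pos; compact edges are embedded
   segments of direction edir, legs are the rays pos(leg s) + R_{>=0} ldir s *)
Definition is_disk (R : realType) (pos : 'I_(nv t) -> 'rV[R]_r) : Prop :=
  (forall e, exists len : R, 0 < len /\
       pos (etgt t e) - pos (esrc t e) = len *: rvec R (edir t e))
  /\ (forall v, v != vinf t -> balanced_at v).

End DiskTypes.

(* tau in T_{w,delta}(theta): some disk of type tau, degree Delta_w, matching
   delta A_w (A_s = {x | <e_i, x> = c s}, s = (i,j)), with h(V_infty) = theta *)
Definition in_Twd (R : realType) (r : nat) (B : 'M[int]_r) (m : nat)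
    (e : 'I_m -> 'rV[int]_r) (l : 'I_m -> nat) (w : forall i, 'I_(l i) -> nat)
    (c : Sidx l -> R) (t : disk_type r (Sidx l)) (delta : R) (theta : 'rV[R]_r)
    : Prop :=
  type_ok t /\
  exists pos : 'I_(nv t) -> 'rV[R]_r,
    [/\ is_disk pos,
        (forall s : Sidx l,
            ldir t s *+ lwt t s = pstar B (e (tag s)) *+ w (tag s) (tagged s)),
        (forall (s : Sidx l) (u : R), 0 <= u ->
            lpair (e (tag s)) (pos (leg t s) + u *: rvec R (ldir t s))
            = delta * c s) &
        pos (vinf t) = theta].

Definition dist2 (R : realType) (r : nat) (x y : 'rV[R]_r) : R :=
  \sum_(k < r) (x 0 k - y 0 k) ^+ 2.

Definition in_Tw (R : realType) (r : nat) (B : 'M[int]_r) (m : nat)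
    (e : 'I_m -> 'rV[int]_r) (l : 'I_m -> nat) (w : forall i, 'I_(l i) -> nat)
    (c : Sidx l -> R) (t : disk_type r (Sidx l)) (theta : 'rV[R]_r) : Prop :=
  forall eps : R, 0 < eps ->
    exists d0 : R, 0 < d0 /\
      forall delta : R, 0 < delta -> delta < d0 ->
        exists theta' : 'rV[R]_r,
          dist2 theta' theta < eps ^+ 2 /\ in_Twd B e w c t delta theta'.

Definition at_most_one_hyperplane (R : realType) (r : nat) (theta : 'rV[R]_r)
    : Prop :=
  forall n n' : 'rV[int]_r, n != 0 -> n' != 0 ->
    lpair n theta = 0 -> lpair n' theta = 0 ->
    forall x : 'rV[R]_r, lpair n x = 0 <-> lpair n' x = 0.

(* P holds for generic constraint data c in R^S: outside a finite union of
   proper affine hyperplanes of R^S *)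
Definition generic_constraints (R : realType) (S : finType)
    (P : (S -> R) -> Prop) : Prop :=
  exists (N : nat) (a : 'I_N -> S -> R) (b : 'I_N -> R),
    (forall k, exists s, a k s != 0) /\
    forall c : S -> R, (forall k, \sum_s a k s * c s != b k) -> P c.

From HB Require Import structures.
From mathcomp Require Import all_boot all_order all_algebra.
From mathcomp Require Import reals.
From mathcomp Require Import zify ring lra.
From Stdlib Require Import ClassicalEpsilon.
Set Implicit Arguments. Unset Strict Implicit. Unset Printing Implicit Defensive.
Import Order.TTheory GRing.Theory Num.Theory.
Local Open Scope ring_scope.

(* If a type in T_w(theta) is not trivalent, its tree has at least two more
   legs than edges.  Relax the disks of that type to a linear problem: vertex
   positions and signed edge lengths subject to the edge equations, a space of
   dimension at most rank L + #edges, mapped to the constraint values in R^S.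
   If this map is not onto, its image lies in a proper hyperplane of R^S which,
   by balancing, depends only on the underlying graph; there are finitely many
   graphs, generic constraints avoid all these hyperplanes, yet delta * c lies
   in the image.  If it is onto, the positions of V_infty over realizations with
   zero constraints form a rational subspace of codimension at least 2, so for
   two independent integral n1, n2 the pairing <n_i, h(V_infty)> is a linear
   function of the constraints, hence proportional to delta on disks matching
   delta A; letting delta go to 0 puts theta on both n1^perp and n2^perp. *)

Lemma sum_card_fibers (X Y : finType) (f : X -> Y) :
  (\sum_y #|[set x | f x == y]| = #|X|)%N.
Proof.
rewrite -sum1_card (partition_big f predT) //=.
by apply: eq_bigr => y _; rewrite -sum1_card; apply: eq_bigl => x; rewrite inE.
Qed.

Lemma sum_mul_intr_if (F : nzRingType) (I : finType) (j : I) (g : I -> F) (a : int) :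
  \sum_i g i * (if i == j then a else 0)%:~R = g j * a%:~R.
Proof.
by rewrite (bigD1 j) //= eqxx big1 ?addr0 // => i /negPf ->; rewrite mulr0.
Qed.

Lemma sum_mul_nat_eq (F : nzRingType) (I : finType) (P : pred I) (g : I -> F) :
  \sum_i g i * (P i)%:R = \sum_(i | P i) g i.
Proof.
by rewrite [RHS]big_mkcond; apply: eq_bigr => i _; case: (P i); rewrite ?mulr1 ?mulr0.
Qed.

Section DiskTypeCombinatorics.
Variables (r : nat) (S : finType) (t : disk_type r S).

Lemma tree_edge_invariant_const (X : Type) (f : 'I_(nv t) -> X) : is_tree t ->
  (forall e, f (esrc t e) = f (etgt t e)) -> forall x y, f x = f y.
Proof.
move=> [conn _] f_edge x y; have /connectP [p xp ->] := conn x y.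
elim: p x xp => [|z p IHp] x //= /andP [/existsP [e xz] zp]; rewrite -(IHp z zp).
by case/orP: xz => /andP [/eqP <- /eqP <-].
Qed.

Lemma sum_valence : (\sum_v valence (t:=t) v = 2 * ne t + #|S|)%N.
Proof.
by rewrite /valence !big_split /= !sum_card_fibers card_ord mul2n -addnn.
Qed.

Lemma type_ok_card_legs : type_ok t -> ((ne t).+1 <= #|S|)%N.
Proof.
case=> [[_ nvE] val_inf val3 _ _].
have := sum_valence; rewrite (bigD1 (vinf t)) //= val_inf.
have: (\sum_(v | v != vinf t) 3 <= \sum_(v | v != vinf t) valence v)%N.
  by apply: leq_sum => v /val3.
rewrite sum_nat_const cardC1 card_ord.
have: (nv t).-1 = ne t by rewrite -nvE.
set X := (\sum_(v | v != vinf t) valence v)%N; lia.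
Qed.

Lemma not_trivalent_card_legs : type_ok t -> ~ trivalent t -> ((ne t).+2 <= #|S|)%N.
Proof.
case=> [[_ nvE] val_inf val3 _ _] not3.
have [v0 v0_inf val_v0] : exists2 v0, v0 != vinf t & valence v0 != 3%N.
  case: (boolP [exists v, (v != vinf t) && (valence v != 3%N)]).
    by case/existsP=> v /andP []; exists v.
  rewrite negb_exists => /forallP all3; case: not3 => v v_inf.
  by apply/eqP; move: (all3 v); rewrite v_inf negbK.
have := sum_valence; rewrite (bigD1 (vinf t)) //= val_inf.
have: (\sum_(v | v != vinf t) (3 + (v == v0)) <= \sum_(v | v != vinf t) valence v)%N.
  apply: leq_sum => v /val3; case: eqP => [->|_] val_v; last by rewrite addn0.
  by rewrite addn1 ltn_neqAle eq_sym val_v0.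
rewrite big_split /= sum_nat_const cardC1 card_ord (bigD1 v0) //= eqxx.
rewrite big1 => [|v /andP [_ /negPf ->]] //.
have: (nv t).-1 = ne t by rewrite -nvE.
set X := (\sum_(v | v != vinf t) valence v)%N; lia.
Qed.

Definition incidence_mx (F : nzRingType) : 'M[F]_(nv t, ne t) :=
  \matrix_(v, e) ((esrc t e == v)%:R - (etgt t e == v)%:R).

Lemma mxrank_incidence (F : fieldType) : is_tree t -> \rank (incidence_mx F) = ne t.
Proof.
move=> tree; apply/eqP; rewrite eqn_leq rank_leq_col /=.
have ker_const : (kermx (incidence_mx F) <= (const_mx 1 : 'rV[F]_(nv t)))%MS.
  apply/row_subP => i; move: (row i _) (row_sub i (kermx (incidence_mx F))) => x.
  move/sub_kermxP => x_ker.
  have x_edge e : x 0 (esrc t e) = x 0 (etgt t e).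
    move/rowP/(_ e)/eqP: x_ker; rewrite !mxE.
    under eq_bigr do rewrite !mxE mulrBr.
    rewrite sumrB !sum_mul_nat_eq !(big_pred1 _ (fun v => eq_sym _ v)) subr_eq0.
    by move/eqP.
  have -> : x = x 0 (vinf t) *: const_mx 1.
    apply/rowP => v; rewrite !mxE mulr1.
    exact: (tree_edge_invariant_const (f := fun v => x 0 v)).
  exact: scalemx_sub.
have := mxrankS ker_const; rewrite mxrank_ker.
have := rank_leq_row (const_mx 1 : 'rV[F]_(nv t)).
case: tree => _ nvE; lia.
Qed.

Lemma tree_flow_eq0 (F : fieldType) (g : 'I_(ne t) -> F) : is_tree t ->
  (forall v, v != vinf t ->
     \sum_(e | esrc t e == v) g e - \sum_(e | etgt t e == v) g e = 0) ->
  forall e, g e = 0.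
Proof.
move=> tree div0.
pose div v := \sum_(e | esrc t e == v) g e - \sum_(e | etgt t e == v) g e.
have div_inf : div (vinf t) = 0.
  have : \sum_v div v = 0.
    have sum_fibers (p : 'I_(ne t) -> 'I_(nv t)) :
        \sum_v \sum_(e | p e == v) g e = \sum_e g e.
      by rewrite [RHS](partition_big p predT).
    by rewrite sumrB !sum_fibers subrr.
  by rewrite (bigD1 (vinf t)) //= big1 ?addr0 // => v /div0.
have gM : \row_e g e *m (incidence_mx F)^T = 0.
  apply/rowP => v; rewrite !mxE.
  under eq_bigr do rewrite !mxE mulrBr.
  rewrite sumrB !sum_mul_nat_eq.
  by case: (eqVneq v (vinf t)) => [->|/div0].
have free : row_free (incidence_mx F)^T by rewrite /row_free mxrank_tr mxrank_incidence.
have /rowP gE := row_free_inj free (etrans gM (esym (mul0mx _ _))).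
by move=> e; move: (gE e); rewrite !mxE.
Qed.

Lemma tree_int_flow_eq0 (g : 'I_(ne t) -> 'rV[int]_r) : is_tree t ->
  (forall v, v != vinf t ->
     \sum_(e | esrc t e == v) g e - \sum_(e | etgt t e == v) g e = 0) ->
  forall e, g e = 0.
Proof.
move=> tree div0 e; apply/rowP => k; apply/eqP; rewrite mxE -(eqr_int rat).
apply/eqP; apply: (tree_flow_eq0 (g := fun e => (g e 0 k)%:~R)) => // v /div0.
move/(congr1 (fun M : 'rV[int]_r => (M 0 k)%:~R : rat)).
by rewrite !mxE !summxE rmorphB !rmorph_sum.
Qed.

Lemma type_ok_tree : type_ok t -> is_tree t.
Proof. by case. Qed.

End DiskTypeCombinatorics.

Lemma inord_inj (n a b : nat) :
  (a <= n)%N -> (b <= n)%N -> inord a = inord b :> 'I_n.+1 -> a = b.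
Proof. by move=> an bn /(congr1 val); rewrite /= !inordK. Qed.

Definition pad (m : nat) (f : 'I_m -> nat) (i : nat) : nat :=
  if insub i is Some x then f x else 0%N.

Lemma padE (m : nat) (f : 'I_m -> nat) (x : 'I_m) : pad f x = f x.
Proof. by rewrite /pad valK. Qed.

Lemma pad_code_eq (N m m' : nat) (f : 'I_m -> nat) (f' : 'I_m' -> nat)
    (eq_m : m = m') :
  (m <= N)%N -> (forall x, f x <= N)%N -> (forall x, f' x <= N)%N ->
  [ffun i : 'I_N => inord (pad f i) : 'I_N.+1]
  = [ffun i : 'I_N => inord (pad f' i) : 'I_N.+1] ->
  forall x, f' (cast_ord eq_m x) = f x.
Proof.
move=> mN fN f'N /ffunP codeE x; have xN : (x < N)%N := leq_trans (ltn_ord x) mN.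
have padN g : (forall y, g y <= N)%N -> (forall i, pad g i <= N)%N.
  by move=> gN i; rewrite /pad; case: insub.
move: (codeE (Ordinal xN)); rewrite !ffunE /=.
move/(inord_inj (padN _ _ fN _) (padN _ _ f'N _)).
by rewrite -(padE f') padE.
Qed.

Section CombinatorialCode.
Variables (r : nat) (S : finType).

(* (#vertices, V_infty, edge sources, edge targets, leg vertices); edges get
   #|S| slots, enough since ne t < #|S| for well-formed types. *)
Definition graph_codes : finType :=
  ('I_#|S|.+1 * 'I_#|S|.+1 * {ffun 'I_#|S| -> 'I_#|S|.+1}
    * {ffun 'I_#|S| -> 'I_#|S|.+1} * {ffun S -> 'I_#|S|.+1})%type.

Definition graph_code (t : disk_type r S) : graph_codes :=
  (inord (nv t), inord (vinf t),
   [ffun i : 'I_#|S| => inord (pad (fun e => val (esrc t e)) i)],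
   [ffun i : 'I_#|S| => inord (pad (fun e => val (etgt t e)) i)],
   [ffun s => inord (leg t s)]).

Lemma type_ok_card_vertices (t : disk_type r S) : type_ok t -> (nv t <= #|S|)%N.
Proof. by move=> ok; have := type_ok_card_legs ok; case: ok => -[_ nvE] _ _ _ _; lia. Qed.

Definition same_graph (t t' : disk_type r S) (eq_nv : nv t = nv t')
    (eq_ne : ne t = ne t') :=
  [/\ vinf t' = cast_ord eq_nv (vinf t),
      (forall e, esrc t' (cast_ord eq_ne e) = cast_ord eq_nv (esrc t e)),
      (forall e, etgt t' (cast_ord eq_ne e) = cast_ord eq_nv (etgt t e)) &
      (forall s, leg t' s = cast_ord eq_nv (leg t s))].

Lemma graph_code_inj (t t' : disk_type r S) :
  type_ok t -> type_ok t' -> graph_code t = graph_code t' ->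
  exists (eq_nv : nv t = nv t') (eq_ne : ne t = ne t'), same_graph eq_nv eq_ne.
Proof.
move=> ok ok' [nvE vinfE srcE tgtE legE].
have nvS := type_ok_card_vertices ok; have nvS' := type_ok_card_vertices ok'.
have neS := type_ok_card_legs ok.
have vS (u : 'I_(nv t)) : (u <= #|S|)%N by apply: leq_trans (ltnW (ltn_ord u)) nvS.
have vS' (u : 'I_(nv t')) : (u <= #|S|)%N by apply: leq_trans (ltnW (ltn_ord u)) nvS'.
have eq_nv : nv t = nv t' by apply: inord_inj nvE.
have eq_ne : ne t = ne t'.
  by case: ok => -[_ E] _ _ _ _; case: ok' => -[_ E'] _ _ _ _; apply/eq_add_S; rewrite E E'.
exists eq_nv, eq_ne; split.
- by apply/val_inj; symmetry; apply: inord_inj vinfE.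
- move=> e; apply/val_inj => /=.
  exact: (pad_code_eq (f := fun e => val (esrc t e)) (f' := fun e => val (esrc t' e))
           eq_ne (ltnW neS) (fun e => vS _) (fun e => vS' _) srcE).
- move=> e; apply/val_inj => /=.
  exact: (pad_code_eq (f := fun e => val (etgt t e)) (f' := fun e => val (etgt t' e))
           eq_ne (ltnW neS) (fun e => vS _) (fun e => vS' _) tgtE).
- move=> s; apply/val_inj; symmetry; apply: inord_inj (vS _) (vS' _) _.
  by move/ffunP/(_ s): legE; rewrite !ffunE.
Qed.

End CombinatorialCode.

Lemma sum_enum_val (V : nmodType) (T : finType) (h : T -> V) :
  \sum_(i < #|T|) h (enum_val i) = \sum_x h x.
Proof. by rewrite -(big_enum_val (A := T)); apply: eq_bigl => x; rewrite inE. Qed.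

Definition int_mx (F : nzRingType) (X Y : finType) (c : X -> Y -> int)
    : 'M[F]_(#|X|, #|Y|) :=
  \matrix_(i, j) (c (enum_val i) (enum_val j))%:~R.

Definition select_mx (F : nzRingType) (X : finType) (n : nat) (f : 'I_n -> X)
    : 'M[F]_(#|X|, n) :=
  \matrix_(i, j) (enum_val i == f j)%:R.

Lemma mul_int_mx (F : nzRingType) (X Y : finType) (c : X -> Y -> int)
    (z : 'rV[F]_#|X|) (y : Y) :
  (z *m int_mx F c) 0 (enum_rank y) = \sum_x z 0 (enum_rank x) * (c x y)%:~R.
Proof.
rewrite !mxE -[RHS]sum_enum_val.
by apply: eq_bigr => i _; rewrite !mxE enum_valK enum_rankK.
Qed.

Lemma mul_select_mx (F : nzRingType) (X : finType) (n : nat) (f : 'I_n -> X)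
    (z : 'rV[F]_#|X|) :
  z *m select_mx F f = \row_j z 0 (enum_rank (f j)).
Proof.
apply/rowP => j; rewrite !mxE.
under eq_bigr do rewrite mxE.
rewrite sum_mul_nat_eq (big_pred1 (enum_rank (f j))) // => i /=.
by apply/eqP/eqP => [<-|->]; rewrite ?enum_valK ?enum_rankK.
Qed.

Lemma map_int_mx (F K : nzRingType) (phi : {rmorphism F -> K}) (X Y : finType)
    (c : X -> Y -> int) :
  map_mx phi (int_mx F c) = int_mx K c.
Proof. by apply/matrixP => i j; rewrite !mxE rmorph_int. Qed.

Lemma map_select_mx (F K : nzRingType) (phi : {rmorphism F -> K}) (X : finType)
    (n : nat) (f : 'I_n -> X) :
  map_mx phi (select_mx F f) = select_mx K f.
Proof. by apply/matrixP => i j; rewrite !mxE rmorph_nat. Qed.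

Lemma lpairE (R : realType) (r : nat) (n : 'rV[int]_r) (x : 'rV[R]_r) :
  lpair n x = (x *m (rvec R n)^T) 0 0.
Proof. by rewrite /lpair !mxE; apply: eq_bigr => k _; rewrite !mxE mulrC. Qed.

Lemma lpair_lin (R : realType) (r : nat) (n : 'rV[int]_r) (a b : R) (x y : 'rV[R]_r) :
  lpair n (a *: x - b *: y) = a * lpair n x - b * lpair n y.
Proof.
rewrite /lpair !mulr_sumr -sumrB; apply: eq_bigr => k _; rewrite !mxE; ring.
Qed.

Lemma dot_self_eq0 (R : realFieldType) (n : nat) (x : 'rV[R]_n) :
  x *m x^T = 0 -> x = 0.
Proof.
move/rowP/(_ 0); rewrite !mxE => sq0; apply/rowP => k; rewrite mxE.
have sq_ge0 j : 0 <= x 0 j * x^T j 0 by rewrite mxE -expr2 sqr_ge0.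
move: (psumr_eq0P (fun j _ => sq_ge0 j) sq0 (i := k) isT) => /eqP.
by rewrite mxE mulf_eq0 orbb => /eqP.
Qed.

Lemma row_sub_of_ker_sub (R : realFieldType) (n : nat) (u1 u2 : 'rV[R]_n) :
  u1 != 0 -> (forall x : 'rV[R]_n, x *m u1^T = 0 -> x *m u2^T = 0) ->
  (u2 <= u1)%MS.
Proof.
move=> u1_neq0 ker_sub.
pose a := (u1 *m u1^T) 0 0; pose lam := (u2 *m u1^T) 0 0 / a.
have a_neq0 : a != 0.
  apply: contra u1_neq0 => /eqP a0.
  by apply/eqP/dot_self_eq0; rewrite [LHS]mx11_scalar -/a a0 raddf0.
pose x := u2 - lam *: u1.
have x_u1 : x *m u1^T = 0.
  rewrite mulmxBl -scalemxAl [u2 *m _]mx11_scalar [u1 *m _]mx11_scalar -/a.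
  by rewrite scale_scalar_mx divfK // subrr.
have x_u2 := ker_sub x x_u1.
have : x *m x^T = 0.
  by rewrite linearB /= linearZ /= mulmxBr -scalemxAr x_u1 x_u2 scaler0 subrr.
move/dot_self_eq0/eqP; rewrite subr_eq0 => /eqP ->.
exact: scalemx_sub.
Qed.

Definition int_scale (r : nat) (q : 'rV[rat]_r) : 'rV[int]_r :=
  \row_k (numq (q 0 k) * \prod_(j | j != k) denq (q 0 j)).

Lemma denq_prod_neq0 (R : realType) (r : nat) (q : 'rV[rat]_r) :
  ((\prod_j denq (q 0 j))%:~R : R) != 0.
Proof. by rewrite intr_eq0; apply/prodf_neq0 => j _; apply: denq_neq0. Qed.

Lemma rvec_int_scale (R : realType) (r : nat) (q : 'rV[rat]_r) :
  rvec R (int_scale q) = ((\prod_j denq (q 0 j))%:~R : R) *: map_mx ratr q.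
Proof.
apply/rowP => k; rewrite !mxE [in RHS](bigD1 k) //= !intrM.
have -> : (numq (q 0 k))%:~R = ratr (q 0 k) * (denq (q 0 k))%:~R :> R.
  by have := congr1 (ratr : rat -> R) (numqE (q 0 k)); rewrite rmorphM /= !ratr_int.
ring.
Qed.

Lemma rvec_int_scale_eq0 (R : realType) (r : nat) (q : 'rV[rat]_r) :
  (rvec R (int_scale q) == 0) = (q == 0).
Proof. by rewrite rvec_int_scale scaler_eq0 (negPf (denq_prod_neq0 R q)) map_mx_eq0. Qed.

Lemma nonzero_row (F : fieldType) (m n : nat) (W : 'M[F]_(m, n)) :
  (0 < \rank W)%N -> exists i, row i W != 0.
Proof.
move=> rankW; apply/existsP; apply: contraLR rankW; rewrite negb_exists => /forallP W0.
suff -> : W = 0 by rewrite mxrank0.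
by apply/row_matrixP => i; move: (W0 i); rewrite negbK row0 => /eqP.
Qed.

Lemma row_ker_tr_annihilates (F : fieldType) (m n : nat) (V : 'M[F]_(m, n)) i :
  V *m (row i (kermx V^T))^T = 0.
Proof. by rewrite -{1}[V]trmxK -trmx_mul (sub_kermxP (row_sub i _)) trmx0. Qed.

Lemma nonzero_annihilator (F : fieldType) (m n : nat) (V : 'M[F]_(m, n)) :
  (\rank V < n)%N -> exists2 q : 'rV[F]_n, q != 0 & V *m q^T = 0.
Proof.
move=> rankV; have [|i Wi_neq0] := @nonzero_row _ _ _ (kermx V^T).
  by rewrite mxrank_ker mxrank_tr subn_gt0.
by exists (row i (kermx V^T)); last exact: row_ker_tr_annihilates.
Qed.

Lemma two_independent_annihilators (F : fieldType) (m n : nat) (V : 'M[F]_(m, n)) :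
  (\rank V + 2 <= n)%N ->
  exists q1 q2 : 'rV[F]_n,
    [/\ q1 != 0, ~~ (q2 <= q1)%MS, V *m q1^T = 0 & V *m q2^T = 0].
Proof.
move=> rankV; pose W := kermx V^T.
have rankW : (2 <= \rank W)%N by rewrite mxrank_ker mxrank_tr; lia.
have [i Wi_neq0] := nonzero_row (ltnW rankW).
have [j Wj_indep] : exists j, ~~ (row j W <= row i W)%MS.
  apply/existsP; apply: contraLR rankW; rewrite negb_exists => /forallP Wi.
  have /mxrankS : (W <= row i W)%MS by apply/row_subP => j; move: (Wi j); rewrite negbK.
  by have := rank_leq_row (row i W); lia.
by exists (row i W), (row j W); split; rewrite ?row_ker_tr_annihilates.
Qed.

Lemma int_scale_neq0 (r : nat) (q : 'rV[rat]_r) : q != 0 -> int_scale q != 0.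
Proof.
apply: contraNneq => q0; apply/eqP/rowP => k.
move/eqP: (congr1 (fun M : 'rV[int]_r => M 0 k) q0).
have dens_neq0 : \prod_(j | j != k) denq (q 0 j) != 0.
  by apply/prodf_neq0 => j _; apply: denq_neq0.
by rewrite !mxE mulf_eq0 numq_eq0 (negPf dens_neq0) orbF => /eqP.
Qed.

Lemma int_scale_hyperplanes_neq (R : realType) (r : nat) (q1 q2 : 'rV[rat]_r) :
  q1 != 0 -> ~~ (q2 <= q1)%MS ->
  ~ (forall x : 'rV[R]_r, lpair (int_scale q1) x = 0 <-> lpair (int_scale q2) x = 0).
Proof.
move=> q1_neq0 q2_indep same_ker.
have : (rvec R (int_scale q2) <= rvec R (int_scale q1))%MS.
  apply: row_sub_of_ker_sub => [|x x1]; first by rewrite rvec_int_scale_eq0.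
  have /same_ker : lpair (int_scale q1) x = 0 by rewrite lpairE x1 mxE.
  by move=> x2; rewrite [LHS]mx11_scalar -lpairE x2 raddf0.
rewrite !rvec_int_scale !(eqmx_scale _ (denq_prod_neq0 _ _)) map_submx.
exact/negP.
Qed.

Section LinearEncoding.
Variables (r : nat) (S : finType) (t : disk_type r S) (eS : S -> 'rV[int]_r).

(* Vertex coordinates (v, k) and edge lengths e. *)
Definition unknown : finType := (('I_(nv t) * 'I_r) + 'I_(ne t))%type.
Definition edge_eqn : finType := ('I_(ne t) * 'I_r)%type.

Definition edge_coef (x : unknown) (y : edge_eqn) : int :=
  match x with
  | inl (v, k) => if k == y.2 then (etgt t y.1 == v)%:Z - (esrc t y.1 == v)%:Z else 0
  | inr e => if e == y.1 then - edir t y.1 0 y.2 else 0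
  end.

Definition leg_coef (x : unknown) (s : S) : int :=
  if x is inl (v, k) then (if v == leg t s then eS s 0 k else 0) else 0.

Lemma sum_unknown (V : nmodType) (g : unknown -> V) :
  \sum_x g x = \sum_v \sum_k g (inl (v, k)) + \sum_e g (inr e).
Proof. by rewrite big_sumType /= pair_bigA; congr (_ + _); apply: eq_bigr => -[]. Qed.

Section Field.
Variable F : fieldType.

Definition edge_mx := int_mx F edge_coef.
Definition leg_mx := int_mx F leg_coef.
Definition root_mx := select_mx F (fun k => inl (vinf t, k) : unknown).
Definition length_mx := select_mx F (fun e => inr e : unknown).

Definition vertex_pos (z : 'rV[F]_#|unknown|) v : 'rV[F]_r :=
  \row_k z 0 (enum_rank (inl (v, k) : unknown)).
Definition edge_len (z : 'rV[F]_#|unknown|) e : F := z 0 (enum_rank (inr e : unknown)).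
Definition unknowns (pos : 'I_(nv t) -> 'rV[F]_r) (len : 'I_(ne t) -> F)
    : 'rV[F]_#|unknown| :=
  \row_i match enum_val i with inl (v, k) => pos v 0 k | inr e => len e end.

Lemma vertex_pos_unknowns pos len v : vertex_pos (unknowns pos len) v = pos v.
Proof. by apply/rowP => k; rewrite !mxE enum_rankK. Qed.

Lemma edge_len_unknowns pos len e : edge_len (unknowns pos len) e = len e.
Proof. by rewrite /edge_len mxE enum_rankK. Qed.

Lemma unknownsK z : unknowns (vertex_pos z) (edge_len z) = z.
Proof.
apply/rowP => i; rewrite mxE.
by case E: (enum_val i) => [[v k]|e]; rewrite ?mxE /edge_len -E enum_valK.
Qed.

Definition edge_consistent (pos : 'I_(nv t) -> 'rV[F]_r) (len : 'I_(ne t) -> F) :=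
  forall e, pos (etgt t e) - pos (esrc t e)
            = len e *: map_mx (fun z : int => z%:~R) (edir t e).

Lemma mul_edge_mx z e k :
  (z *m edge_mx) 0 (enum_rank ((e, k) : edge_eqn)) =
  vertex_pos z (etgt t e) 0 k - vertex_pos z (esrc t e) 0 k
  - edge_len z e * (edir t e 0 k)%:~R.
Proof.
rewrite mul_int_mx sum_unknown /= sum_mul_intr_if intrN mulrN.
under eq_bigr do rewrite sum_mul_intr_if intrB -!pmulrn mulrBr.
by rewrite sumrB !sum_mul_nat_eq !(big_pred1 _ (fun v => eq_sym _ v)) !mxE.
Qed.

Lemma edge_mx_eq0 z :
  z *m edge_mx = 0 <-> edge_consistent (vertex_pos z) (edge_len z).
Proof.
split=> [zE e|zE].
  apply/rowP => k; move/rowP/(_ (enum_rank ((e, k) : edge_eqn)))/eqP: zE.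
  by rewrite mul_edge_mx !mxE subr_eq0 mulrC => /eqP.
apply/rowP => j; rewrite -(enum_valK j); case: (enum_val j) => e k.
have := congr1 (fun M : 'rV[F]_r => M 0 k) (zE e).
by rewrite mul_edge_mx !mxE => ->; rewrite mulrC subrr.
Qed.

Lemma mul_leg_mx z s :
  (z *m leg_mx) 0 (enum_rank s) = \sum_k (eS s 0 k)%:~R * vertex_pos z (leg t s) 0 k.
Proof.
rewrite mul_int_mx sum_unknown /= [X in _ + X]big1 ?addr0 => [|e _]; last by rewrite mulr0.
rewrite exchange_big /=; apply: eq_bigr => k _.
by rewrite sum_mul_intr_if mulrC mxE.
Qed.

Lemma mul_root_mx z : z *m root_mx = vertex_pos z (vinf t).
Proof. by rewrite mul_select_mx. Qed.

Definition root_kernel_mx :=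
  ((kermx edge_mx :&: kermx leg_mx) *m root_mx)%MS.

Lemma mxrank_ker_edge_mx : is_tree t -> (\rank (kermx edge_mx) <= r + ne t)%N.
Proof.
move=> tree.
have ker0 : \rank (kermx edge_mx :&: kermx (row_mx root_mx length_mx))%MS = 0%N.
  apply/eqP; rewrite mxrank_eq0 -submx0; apply/row_subP => i.
  move: (row i _) (row_sub i (kermx edge_mx :&: kermx (row_mx root_mx length_mx))%MS) => z.
  rewrite sub_capmx !sub_kermx => /andP [/eqP /edge_mx_eq0 zE].
  rewrite mul_mx_row mul_root_mx mul_select_mx => /eqP.
  rewrite -row_mx0 => /eq_row_mx [pos_inf len0].
  have lenz e : edge_len z e = 0 by move/rowP/(_ e): len0; rewrite !mxE.
  have posz v : vertex_pos z v = 0.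
    rewrite -pos_inf; apply: (tree_edge_invariant_const tree) => e.
    by symmetry; apply/eqP; rewrite -subr_eq0 zE lenz scale0r.
  rewrite submx0 -(unknownsK z); apply/eqP/rowP => j; rewrite !mxE.
  by case: (enum_val j) => [[v k]|e]; rewrite ?lenz // posz mxE.
have := mxrank_mul_ker (kermx edge_mx) (row_mx root_mx length_mx).
by rewrite ker0 addn0 => <-; apply: rank_leq_col.
Qed.

End Field.
Lemma map_root_kernel_mx (F K : fieldType) (phi : {rmorphism F -> K}) :
  (map_mx phi (root_kernel_mx F) :=: root_kernel_mx K)%MS.
Proof.
rewrite map_mxM map_select_mx; apply: eqmxMr.
by apply: eqmx_trans (map_capmx _ _ _) _; rewrite !map_kermx !map_int_mx.
Qed.

End LinearEncoding.

Arguments edge_consistent {r S} t {F} pos len.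

Section Realizations.
Variables (R : realType) (r : nat) (S : finType) (t : disk_type r S)
  (eS : S -> 'rV[int]_r).

(* Edge lengths may have any sign: this is a linear relaxation of disks of type t. *)
Definition realizable (y : S -> R) := exists pos len,
  edge_consistent t pos len /\ forall s, lpair (eS s) (pos (leg t s)) = y s.

Definition row_of_fun (y : S -> R) : 'rV[R]_#|S| := \row_j y (enum_val j).

Lemma edge_consistent_unknowns pos len :
  edge_consistent t pos len -> unknowns pos len *m edge_mx t R = 0.
Proof.
by move=> E; apply/edge_mx_eq0 => e; rewrite !vertex_pos_unknowns edge_len_unknowns.
Qed.

Lemma mul_leg_mx_unknowns pos len :
  unknowns pos len *m leg_mx t eS R
  = row_of_fun (fun s => lpair (eS s) (pos (leg t s))).
Proof.
apply/rowP => j; rewrite -(enum_valK j) mul_leg_mx vertex_pos_unknowns.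
by rewrite mxE enum_valK.
Qed.

Lemma realizableP y :
  realizable y <-> (row_of_fun y <= kermx (edge_mx t R) *m leg_mx t eS R)%MS.
Proof.
split=> [[pos [len [E C]]]|/submxP [w yE]].
  have /submxP [w zE] : (unknowns pos len <= kermx (edge_mx t R))%MS.
    exact/sub_kermxP/edge_consistent_unknowns.
  apply/submxP; exists w; rewrite mulmxA -zE mul_leg_mx_unknowns.
  by apply/rowP => j; rewrite !mxE C.
pose z := w *m kermx (edge_mx t R).
have /edge_mx_eq0 E : z *m edge_mx t R = 0 by rewrite -mulmxA mulmx_ker mulmx0.
exists (vertex_pos z), (edge_len z); split=> // s.
move/rowP/(_ (enum_rank s)): yE; rewrite mulmxA -/z mul_leg_mx !mxE enum_rankK.
by move=> ->.
Qed.

Definition root_pairing_determined (n : 'rV[int]_r) :=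
  forall pos (len : 'I_(ne t) -> R),
  edge_consistent t pos len -> (forall s, lpair (eS s) (pos (leg t s)) = 0) ->
  lpair n (pos (vinf t)) = 0.

Lemma root_pairing_homogeneous n (d1 d2 : R) (c : S -> R) pos1 len1 pos2 len2 :
  root_pairing_determined n ->
  edge_consistent t pos1 len1 -> edge_consistent t pos2 len2 ->
  (forall s, lpair (eS s) (pos1 (leg t s)) = d1 * c s) ->
  (forall s, lpair (eS s) (pos2 (leg t s)) = d2 * c s) ->
  d1 * lpair n (pos2 (vinf t)) = d2 * lpair n (pos1 (vinf t)).
Proof.
move=> det E1 E2 C1 C2; apply/eqP; rewrite -subr_eq0 -lpair_lin; apply/eqP.
apply: (det (fun v => d1 *: pos2 v - d2 *: pos1 v) (fun e => d1 * len2 e - d2 * len1 e))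
  => [e|s].
  apply/rowP => k; rewrite !mxE.
  have := congr1 (fun M : 'rV[R]_r => M 0 k) (E1 e).
  have := congr1 (fun M : 'rV[R]_r => M 0 k) (E2 e).
  rewrite !mxE => D2 D1.
  transitivity (d1 * (pos2 (etgt t e) 0 k - pos2 (esrc t e) 0 k)
                - d2 * (pos1 (etgt t e) 0 k - pos1 (esrc t e) 0 k)); first by ring.
  by rewrite D1 D2; ring.
by rewrite lpair_lin C1 C2; ring.
Qed.

Lemma mxrank_root_kernel_mx : type_ok t -> ~ trivalent t ->
  (forall y, realizable y) -> (\rank (root_kernel_mx t eS R) + 2 <= r)%N.
Proof.
move=> ok not3 all_real.
have /eqP full : row_full (kermx (edge_mx t R) *m leg_mx t eS R).
  rewrite -sub1mx; apply/row_subP => i; rewrite row1.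
  have -> : delta_mx 0 i = row_of_fun (fun s => (enum_rank s == i)%:R).
    by apply/rowP => j; rewrite !mxE enum_valK.
  exact/realizableP.
have := mxrank_mul_ker (kermx (edge_mx t R)) (leg_mx t eS R); rewrite full.
have := mxrank_ker_edge_mx R (type_ok_tree ok).
have := not_trivalent_card_legs ok not3.
have := mxrankM_maxl (kermx (edge_mx t R) :&: kermx (leg_mx t eS R))%MS (root_mx t R).
rewrite /root_kernel_mx; lia.
Qed.

Lemma root_pairing_determined_of_annihilator n :
  root_kernel_mx t eS R *m (rvec R n)^T = 0 -> root_pairing_determined n.
Proof.
move=> annih pos len E C.
have z_cap : (unknowns pos len <= kermx (edge_mx t R) :&: kermx (leg_mx t eS R))%MS.
  rewrite sub_capmx !sub_kermx edge_consistent_unknowns // eqxx /=.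
  by rewrite mul_leg_mx_unknowns; apply/eqP/rowP => j; rewrite !mxE C.
have /submxP [w ->] : (pos (vinf t) <= root_kernel_mx t eS R)%MS.
  by rewrite -(vertex_pos_unknowns pos len) -mul_root_mx submxMr.
by rewrite lpairE -mulmxA annih mulmx0 mxE.
Qed.

Lemma full_realizable_root_hyperplanes : type_ok t -> ~ trivalent t ->
  (forall y, realizable y) ->
  exists n1 n2 : 'rV[int]_r,
    [/\ ~ (forall x : 'rV[R]_r, lpair n1 x = 0 <-> lpair n2 x = 0),
        n1 != 0, n2 != 0, root_pairing_determined n1 & root_pairing_determined n2].
Proof.
move=> ok not3 all_real.
pose ratR : {rmorphism rat -> R} := ratr.
have rankV : (\rank (root_kernel_mx t eS rat) + 2 <= r)%N.
  by rewrite -(mxrank_map ratR) (map_root_kernel_mx _ _ ratR) mxrank_root_kernel_mx.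
have [q1 [q2 [q1_neq0 q2_indep Vq1 Vq2]]] := two_independent_annihilators rankV.
have det q : root_kernel_mx t eS rat *m q^T = 0 -> root_pairing_determined (int_scale q).
  move=> Vq; apply: root_pairing_determined_of_annihilator.
  have /submxP [w ->] : (root_kernel_mx t eS R <= map_mx ratR (root_kernel_mx t eS rat))%MS.
    by rewrite (map_root_kernel_mx _ _ ratR).
  rewrite rvec_int_scale linearZ /= -scalemxAr -mulmxA map_trmx -map_mxM Vq.
  by rewrite map_mx0 mulmx0 scaler0.
have q2_neq0 : q2 != 0 by apply: contraNneq q2_indep => ->; rewrite sub0mx.
exists (int_scale q1), (int_scale q2); split; auto using int_scale_neq0.
exact: int_scale_hyperplanes_neq.
Qed.

End Realizations.

Section BalancedTypes.
Variables (r : nat) (S : finType) (L : S -> 'rV[int]_r).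

Definition balanced_type (t : disk_type r S) :=
  [/\ type_ok t, (forall v, v != vinf t -> balanced_at v) &
      (forall s, ldir t s *+ lwt t s = L s)].

Lemma balanced_type_ok t : balanced_type t -> type_ok t.
Proof. by case. Qed.

Lemma same_graph_edge_flow (t t' : disk_type r S) (eq_nv : nv t = nv t')
    (eq_ne : ne t = ne t') :
  balanced_type t -> balanced_type t' -> same_graph eq_nv eq_ne ->
  forall e, edir t' (cast_ord eq_ne e) *+ ewt t' (cast_ord eq_ne e)
            = edir t e *+ ewt t e.
Proof.
case=> [ok bal legsL] [_ bal' legsL'] [vinfE srcE tgtE legE].
pose flow' e := edir t' (cast_ord eq_ne e) *+ ewt t' (cast_ord eq_ne e).
suff flow0 : forall e, edir t e *+ ewt t e - flow' e = 0.
  by move=> e; apply/eqP; rewrite eq_sym -subr_eq0 flow0.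
apply: (tree_int_flow_eq0 (type_ok_tree ok)) => v v_inf.
have v_inf' : cast_ord eq_nv v != vinf t' by rewrite vinfE (inj_eq (@cast_ord_inj _ _ _)).
have srcP e : (esrc t' (cast_ord eq_ne e) == cast_ord eq_nv v) = (esrc t e == v).
  by rewrite srcE (inj_eq (@cast_ord_inj _ _ _)).
have tgtP e : (etgt t' (cast_ord eq_ne e) == cast_ord eq_nv v) = (etgt t e == v).
  by rewrite tgtE (inj_eq (@cast_ord_inj _ _ _)).
have legP s : (leg t' s == cast_ord eq_nv v) = (leg t s == v).
  by rewrite legE (inj_eq (@cast_ord_inj _ _ _)).
move: (bal v v_inf) (bal' _ v_inf'); rewrite /balanced_at.
rewrite !(reindex (cast_ord eq_ne)) /=;
  try exact: onW_bij _ (Bijective (cast_ordK _) (cast_ordKV _)).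
rewrite (eq_bigl _ _ srcP) (eq_bigl _ _ tgtP) (eq_big _ _ legP (fun s _ => legsL' s)).
rewrite (eq_bigr _ (fun s _ => legsL s)).
move=> /eqP; rewrite addr_eq0 => /eqP B /eqP; rewrite addr_eq0 => /eqP B'.
by rewrite !sumrB opprD opprK addrACA B [X in _ + X]addrC -opprB B' subrr.
Qed.

Lemma graph_code_realizable (R : realType) (eS : S -> 'rV[int]_r)
    (t t' : disk_type r S) :
  balanced_type t -> balanced_type t' -> graph_code t = graph_code t' ->
  forall y : S -> R, realizable t' eS y -> realizable t eS y.
Proof.
move=> bal bal' codeE y [pos' [len' [E' C']]].
have [eq_nv [eq_ne G]] :=
  graph_code_inj (balanced_type_ok bal) (balanced_type_ok bal') codeE.
have flowE := same_graph_edge_flow bal bal' G.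
case: G => _ srcE tgtE legE.
pose w e : R := (ewt t e)%:R / (ewt t' (cast_ord eq_ne e))%:R.
have dirE e : rvec R (edir t' (cast_ord eq_ne e)) = w e *: rvec R (edir t e).
  have w'_neq0 : (ewt t' (cast_ord eq_ne e))%:R != 0 :> R.
    by case: bal' => -[_ _ _ [w'_gt0 _] _] _ _; rewrite pnatr_eq0 -lt0n.
  apply/rowP => k; apply: (mulIf w'_neq0).
  move/rowP/(_ k)/(congr1 (fun z : int => z%:~R : R)): (flowE e).
  rewrite !mxE !mulmxnE !rmorphMn /= -[_ *+ ewt t' _]mulr_natr -[_ *+ ewt t e]mulr_natr.
  by move=> ->; rewrite /w; field.
exists (fun v => pos' (cast_ord eq_nv v)), (fun e => len' (cast_ord eq_ne e) * w e).
split=> [e|s]; last by rewrite -C' legE.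
by rewrite -srcE -tgtE E' -[map_mx _ (edir t' _)]/(rvec R _) dirE scalerA.
Qed.

Lemma unrealizable_annihilator (R : realType) (eS : S -> 'rV[int]_r)
    (t : disk_type r S) :
  balanced_type t -> (exists y0 : S -> R, ~ realizable t eS y0) ->
  exists a : S -> R, (exists s, a s != 0) /\
    forall t', balanced_type t' -> graph_code t' = graph_code t ->
    forall y : S -> R, realizable t' eS y -> \sum_s a s * y s = 0.
Proof.
move=> bal [y0 not_real].
pose M := kermx (edge_mx t R) *m leg_mx t eS R.
have [|u u_neq0 Mu] := @nonzero_annihilator _ _ _ M.
  rewrite ltn_neqAle rank_leq_col andbT; apply: contra_not_neq not_real => full.
  by apply/realizableP/submx_full; rewrite /row_full full.
exists (fun s => u 0 (enum_rank s)); split.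
  have [j uj] : exists j, u 0 j != 0.
    apply/existsP; apply: contraNT u_neq0; rewrite negb_exists => /forallP u0.
    by apply/eqP/rowP => j; move: (u0 j); rewrite negbK mxE => /eqP.
  by exists (enum_val j); rewrite enum_valK.
move=> t' bal' codeE y /(graph_code_realizable bal bal' (esym codeE)).
move/realizableP/submxP => [w yE].
have : row_of_fun y *m u^T = 0 by rewrite yE -mulmxA Mu mulmx0.
move/rowP/(_ 0); rewrite !mxE => sum0; rewrite -[LHS]sum_enum_val.
by apply: etrans sum0; apply: eq_bigr => j _; rewrite !mxE enum_valK mulrC.
Qed.

End BalancedTypes.

Lemma dist2_coord_le (R : realType) (r : nat) (x y : 'rV[R]_r) (eps : R) :
  0 < eps -> dist2 x y < eps ^+ 2 -> forall k, `|x 0 k - y 0 k| <= eps.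
Proof.
move=> eps_gt0 dxy k.
have : (x 0 k - y 0 k) ^+ 2 < eps ^+ 2.
  apply: le_lt_trans dxy; rewrite /dist2 (bigD1 k) //= lerDl.
  by apply: sumr_ge0 => i _; apply: sqr_ge0.
by move: (x 0 k - y 0 k) => a a_lt; rewrite ler_norml; apply/andP; split; nra.
Qed.

Lemma lpair_dist_le (R : realType) (r : nat) (n : 'rV[int]_r) (x y : 'rV[R]_r)
    (eps : R) :
  0 < eps -> dist2 x y < eps ^+ 2 ->
  `|lpair n x - lpair n y| <= (\sum_k `|(n 0 k)%:~R : R|) * eps.
Proof.
move=> eps_gt0 /(dist2_coord_le eps_gt0) dxy; rewrite /lpair -sumrB mulr_suml.
apply: le_trans (ler_norm_sum _ _ _) _; apply: ler_sum => k _.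
by rewrite -mulrBr normrM ler_wpM2l.
Qed.

Lemma lpair_limit_eq0 (R : realType) (r : nat) (n : 'rV[int]_r) (theta : 'rV[R]_r)
    (P : R -> 'rV[R]_r -> Prop) :
  (forall eps : R, 0 < eps -> exists d0 : R, 0 < d0 /\
     forall delta, 0 < delta -> delta < d0 ->
       exists th, dist2 th theta < eps ^+ 2 /\ P delta th) ->
  (forall d1 d2 th1 th2, 0 < d1 -> 0 < d2 -> P d1 th1 -> P d2 th2 ->
       d1 * lpair n th2 = d2 * lpair n th1) ->
  lpair n theta = 0.
Proof.
move=> near homog.
have [d1 [d1_gt0 P1]] : exists d1, 0 < d1 /\ exists th1, P d1 th1.
  have [d0 [d0_gt0 near1]] := near 1 ltr01.
  have [th1 [_ P1]] := near1 (d0 / 2) ltac:(lra) ltac:(lra).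
  by exists (d0 / 2); split; [lra|exists th1].
case: P1 => th1 P1; pose K := lpair n th1 / d1.
have lpair_P d th : 0 < d -> P d th -> lpair n th = d * K.
  move=> d_gt0 Pd; apply: (mulfI (lt0r_neq0 d1_gt0)).
  by rewrite (homog _ _ _ _ d1_gt0 d_gt0 P1 Pd) /K; field; rewrite lt0r_neq0.
have K_ge0 := normr_ge0 K.
pose C := \sum_k `|(n 0 k)%:~R : R|.
have C_ge0 : 0 <= C by apply: sumr_ge0 => k _.
apply/eqP; rewrite -normr_le0; apply/ler_addgt0Pr => e e_gt0; rewrite add0r.
pose eps := e / (2 * (C + 1)).
have eps_gt0 : 0 < eps by apply: divr_gt0; lra.
have eps_def : eps * (2 * (C + 1)) = e by rewrite divfK //; apply: lt0r_neq0; lra.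
have [d0 [d0_gt0 near_eps]] := near eps eps_gt0.
pose delta := Num.min (d0 / 2) (e / (2 * (`|K| + 1))).
have delta_gt0 : 0 < delta by rewrite lt_min; apply/andP; split; apply: divr_gt0; lra.
have delta_K : delta * (2 * (`|K| + 1)) <= e.
  by rewrite -ler_pdivlMr ?ge_min ?lexx ?orbT //; lra.
have delta_lt : delta < d0 by rewrite gt_min; apply/orP; left; lra.
have [th [dist Pth]] := near_eps delta delta_gt0 delta_lt.
have := lpair_dist_le n eps_gt0 dist; rewrite (lpair_P _ _ delta_gt0 Pth) -/C.
have := ler_normB (delta * K) (delta * K - lpair n theta).
rewrite opprB addrC subrK normrM (gtr0_norm delta_gt0); nra.
Qed.

Lemma generic_constraints_of_annihilated (R : realType) (S K : finType)
    (Y : K -> (S -> R) -> Prop) (P : (S -> R) -> Prop) :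
  (forall c, ~ P c -> exists kap, Y kap c /\
     exists a : S -> R, (exists s, a s != 0) /\
       forall y, Y kap y -> \sum_s a s * y s = 0) ->
  generic_constraints P.
Proof.
move=> annih.
have [S0|/card_gt0P [s0 _]] := posnP #|S|.
  exists 0%N, (fun _ _ => 0), (fun _ => 0); split=> [[]//|c _].
  apply: NNPP => /annih [_ [_ [_ [[s _] _]]]].
  by move: (card0_eq S0 s); rewrite !inE.
pose annihilates kap (a : S -> R) := forall y, Y kap y -> \sum_s a s * y s = 0.
pose choice kap (a : S -> R) :=
  (exists s, a s != 0) /\ ((exists2 a', exists s, a' s != 0 & annihilates kap a') ->
                           annihilates kap a).
(* When kap has no nonzero annihilator, the constant 1 keeps the hyperplane proper. *)
pose a kap := epsilon (inhabits (fun _ => 1)) (choice kap).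
have a_spec kap : choice kap (a kap).
  apply: epsilon_spec; have [[a' a'_neq0 a'_ann]|none] :=
    classic (exists2 a', exists s, a' s != 0 & annihilates kap a').
    by exists a'; split => // _.
  by exists (fun _ => 1); split=> [|//]; exists s0; rewrite oner_neq0.
exists #|K|, (fun i => a (enum_val i)), (fun _ => 0); split.
  by move=> i; case: (a_spec (enum_val i)).
move=> c avoid; apply: NNPP => /annih [kap [Yc [a' [a'_neq0 a'_ann]]]].
have [_ /(_ (ex_intro2 _ _ a' a'_neq0 a'_ann)) a_ann] := a_spec kap.
by move: (avoid (enum_rank kap)); rewrite enum_rankK (a_ann c Yc) eqxx.
Qed.

Section TropicalDisks.
Variables (R : realType) (r : nat) (B : 'M[int]_r) (m : nat) (e : 'I_m -> 'rV[int]_r)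
  (l : 'I_m -> nat) (w : forall i, 'I_(l i) -> nat) (c : Sidx l -> R).

Definition leg_degree (s : Sidx l) := pstar B (e (tag s)) *+ @w (tag s) (tagged s).
Definition leg_normal (s : Sidx l) := e (tag s).

Definition code_realizable (kap : graph_codes (Sidx l)) (c : Sidx l -> R) :=
  exists2 t : disk_type r (Sidx l), balanced_type leg_degree t /\ graph_code t = kap &
    exists2 delta, 0 < delta & realizable t leg_normal (fun s => delta * c s).

Lemma in_Twd_realization (t : disk_type r (Sidx l)) delta theta :
  in_Twd B e w c t delta theta ->
  balanced_type leg_degree t /\ exists pos len,
    [/\ edge_consistent t pos len,
        forall s, lpair (leg_normal s) (pos (leg t s)) = delta * c s &
        pos (vinf t) = theta].
Proof.
case=> ok [pos [[edges bal] degE legE vinfE]]; split; first by split.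
have /(_ _) /constructive_indefinite_description lenP := edges.
exists pos, (fun e => sval (lenP e)); split=> // [e'|s].
  exact: (proj2 (svalP (lenP e'))).
by move: (legE s 0 (lexx 0)); rewrite scale0r addr0.
Qed.

Lemma in_Tw_in_Twd (t : disk_type r (Sidx l)) theta :
  in_Tw B e w c t theta -> exists delta theta', 0 < delta /\ in_Twd B e w c t delta theta'.
Proof.
case/(_ 1 ltr01) => d0 [d0_gt0 near].
have [theta' [_ inTd]] := near (d0 / 2) ltac:(lra) ltac:(lra).
by exists (d0 / 2), theta'; split=> //; lra.
Qed.

Lemma in_Tw_unrealizable (t : disk_type r (Sidx l)) theta :
  at_most_one_hyperplane theta -> in_Tw B e w c t theta -> ~ trivalent t ->
  exists y : Sidx l -> R, ~ realizable t leg_normal y.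
Proof.
move=> one_hyp inT not3; apply: NNPP => some_unreal.
have all_real (y : Sidx l -> R) : realizable t leg_normal y.
  by apply: NNPP => unreal; apply: some_unreal; exists y.
have [delta [theta' [_ /in_Twd_realization [[ok _ _] _]]]] := in_Tw_in_Twd inT.
have [n1 [n2 [differ n1_neq0 n2_neq0 det1 det2]]] :=
  full_realizable_root_hyperplanes ok not3 all_real.
have root0 n : root_pairing_determined R t leg_normal n -> lpair n theta = 0.
  move=> det; apply: (lpair_limit_eq0 (P := in_Twd B e w c t)) => // d1 d2 th1 th2 _ _.
  move=> /in_Twd_realization [_ [pos1 [len1 [E1 C1 <-]]]].
  move=> /in_Twd_realization [_ [pos2 [len2 [E2 C2 <-]]]].
  exact: root_pairing_homogeneous det E1 E2 C1 C2.
by apply: differ; apply: one_hyp; rewrite ?root0.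
Qed.

End TropicalDisks.

Arguments leg_degree {r} B {m} e {l} w s.
Arguments leg_normal {r m} e {l} s.
Arguments code_realizable {R r} B {m} e {l} w kap c.

Theorem lemma4p3 (R : realType) (r : nat) (B : 'M[int]_r)
    (k : nat) (g : 'I_k -> 'rV[int]_r)
    (m : nat) (e : 'I_m -> 'rV[int]_r)
    (l : 'I_m -> nat) (w : forall i, 'I_(l i) -> nat) :
  skew_form B ->
  strictly_convex_cone R g ->
  (forall i, in_Lambda_plus R g (e i)) ->
  weight_vector_ok w ->
  generic_constraints
    (fun c : Sidx l -> R =>
       forall theta : 'rV[R]_r, at_most_one_hyperplane theta ->
       forall t : disk_type r (Sidx l),
         in_Tw B e w c t theta -> trivalent t).
Proof.
move=> _ _ _ _.
apply: (generic_constraints_of_annihilated (Y := code_realizable B e w)).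
move=> c not_triv.
have [theta [t [one_hyp inT not3]]] : exists theta t,
    [/\ at_most_one_hyperplane theta, in_Tw B e w c t theta & ~ trivalent t].
  apply: NNPP => none; apply: not_triv => theta one t inT.
  by apply: NNPP => not3; apply: none; exists theta, t.
have [delta [theta' [delta_gt0 inTd]]] := in_Tw_in_Twd inT.
have [bal [pos [len [E C _]]]] := in_Twd_realization inTd.
have [a [a_neq0 a_ann]] := unrealizable_annihilator bal (in_Tw_unrealizable one_hyp inT not3).
exists (graph_code t); split.
  by exists t => //; exists delta => //; exists pos, len.
exists a; split=> // y [t' [bal' codeE] [d d_gt0 real']].
apply: (mulfI (lt0r_neq0 d_gt0)); rewrite mulr0 mulr_sumr.
apply: etrans (a_ann t' bal' codeE _ real').
by apply: eq_bigr => s _; rewrite mulrCA.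
Qed.
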